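(* Let $r\geq 1$ be an integer. Then for any $s\in\mathbb{R}$ with $s>1$, $$ t_r(s)=\sum_{j=0}^{r}\frac{(-1)^{r-j}}{2^{(r-j)s}}\,\zeta_j(s)\,\zeta^{\star}_{r-j}(s) \quad\text{and}\quad t^{\star}_r(s)=\sum_{j=0}^{r}\frac{(-1)^{r-j}}{2^{(r-j)s}}\,\zeta_{r-j}(s)\,\zeta^{\star}_{j}(s). $$
   Context: For an integer $r\geq 1$ and real $s>1$ define, with integer summation indices, $\zeta_r(s):=\sum_{n_1>\cdots>n_r>0}\prod_{i=1}^r n_i^{-s}$, $\zeta^{\star}_r(s):=\sum_{n_1\geq\cdots\geq n_r\geq 1}\prod_{i=1}^r n_i^{-s}$, $t_r(s):=\sum_{n_1>\cdots>n_r>0}\prod_{i=1}^r (2n_i-1)^{-s}$, $t^{\star}_r(s):=\sum_{n_1\geq\cdots\geq n_r\geq 1}\prod_{i=1}^r (2n_i-1)^{-s}$. For $r=0$ all four functions are set equal to $1$: $\zeta_0(s)=\zeta^{\star}_0(s)=t_0(s)=t^{\star}_0(s)=1$. *)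

From mathcomp Require Import all_boot all_order all_algebra.
From mathcomp Require Import all_classical all_reals all_analysis.
Set Implicit Arguments. Unset Strict Implicit. Unset Printing Implicit Defensive.
Import Order.TTheory GRing.Theory Num.Theory numFieldNormedType.Exports.
Local Open Scope ring_scope.

(* Index tuples (n_1, ..., n_r), represented as finite functions 'I_r -> 'I_N.+1,
   i.e. all entries bounded by N.  (n_1 = t ord_1st, i.e. index 0.) *)

Definition strict_chain (r N : nat) (t : {ffun 'I_r -> 'I_N.+1}) : bool :=
  [forall i : 'I_r, (0 < (t i : nat))%N] &&
  [forall i : 'I_r, forall j : 'I_r, (i < j)%N ==> ((t j : nat) < t i)%N].

Definition weak_chain (r N : nat) (t : {ffun 'I_r -> 'I_N.+1}) : bool :=
  [forall i : 'I_r, (0 < (t i : nat))%N] &&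
  [forall i : 'I_r, forall j : 'I_r, (i < j)%N ==> ((t j : nat) <= t i)%N].

Definition trunc_sum {R : realType} (chain : forall r N, pred {ffun 'I_r -> 'I_N.+1})
    (f : nat -> nat) (r : nat) (s : R) (N : nat) : R :=
  \sum_(t : {ffun 'I_r -> 'I_N.+1} | chain r N t)
     \prod_(i < r) ((f (t i : nat))%:R `^ (- s)).

(* The infinite (nonnegative-term) series is the limit of the box-truncated sums. *)
Definition zeta_r {R : realType} (r : nat) (s : R) : R :=
  limn (trunc_sum strict_chain id r s).
Definition zeta_star_r {R : realType} (r : nat) (s : R) : R :=
  limn (trunc_sum weak_chain id r s).
Definition t_r {R : realType} (r : nat) (s : R) : R :=
  limn (trunc_sum strict_chain (fun n => n.*2.-1) r s).
Definition t_star_r {R : realType} (r : nat) (s : R) : R :=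
  limn (trunc_sum weak_chain (fun n => n.*2.-1) r s).

(* Truncate every series at N.  With c_n = n^(-s), the truncated zeta_r and
   zeta*_r are the elementary and complete homogeneous symmetric functions
   e_r(c_1, ..., c_N) and h_r(c_1, ..., c_N), and the truncated t_r, t*_r are
   the same functions of the odd-indexed values c_(2n-1).  The values up to
   2N split into the odd-indexed ones and the even-indexed ones
   c_(2n) = 2^(-s) c_n, so for the generating polynomials
   E(X) = prod (1 + c X) and H(X) = prod 1/(1 - c X) we have
   E_odd = E_(<=2N) / E_even, H_odd = H_(<=2N) / H_even, and
   1/E_even(X) = H_(<=N)(-2^(-s) X), 1/H_even(X) = E_(<=N)(-2^(-s) X).
   Comparing coefficients below degree r+1 gives both identities for the
   truncated sums; all of them are nondecreasing in N and bounded by a power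
   of (1 - 2^(1-s))^-1 (Cauchy condensation), so the limit can be taken
   termwise, with the inner sums truncated at 2N. *)

From mathcomp Require Import all_boot all_order all_algebra.
From mathcomp Require Import all_classical all_reals all_analysis.
From mathcomp Require Import ring.
Import Order.TTheory GRing.Theory Num.Theory numFieldNormedType.Exports.
Local Open Scope classical_set_scope.
Local Open Scope ring_scope.
Set Implicit Arguments. Unset Strict Implicit. Unset Printing Implicit Defensive.

Lemma forall_ordS r (P : pred 'I_r.+1) :
  [forall i, P i] = P ord0 && [forall i : 'I_r, P (lift ord0 i)].
Proof.
apply/forallP/andP => [HP | [P0 /forallP HP] i]; first by split; last apply/forallP.
by case: (unliftP ord0 i) => [j ->|->].
Qed.

Section ChainSums.
Variable R : pzSemiRingType.
Implicit Types (cmp : rel nat) (a : nat -> R).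

Definition chain cmp r N (t : {ffun 'I_r -> 'I_N.+1}) : bool :=
  [forall i : 'I_r, (0 < t i)%N] &&
  [forall i : 'I_r, forall j : 'I_r, (i < j)%N ==> cmp (t j) (t i)].

Definition ffun_cons r N (y : 'I_N.+1) (g : {ffun 'I_r -> 'I_N.+1}) :
    {ffun 'I_r.+1 -> 'I_N.+1} :=
  [ffun i => if unlift ord0 i is Some j then g j else y].

Lemma ffun_cons0 r N y (g : {ffun 'I_r -> 'I_N.+1}) : ffun_cons y g ord0 = y.
Proof. by rewrite ffunE unlift_none. Qed.

Lemma ffun_consS r N y (g : {ffun 'I_r -> 'I_N.+1}) j : ffun_cons y g (lift ord0 j) = g j.
Proof. by rewrite ffunE liftK. Qed.

Lemma chain_cons cmp r N (y : 'I_N.+1) (g : {ffun 'I_r -> 'I_N.+1}) :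
  chain cmp (ffun_cons y g) =
  [&& (0 < y)%N, [forall i, cmp (g i) y] & chain cmp g].
Proof.
rewrite /chain !forall_ordS ffun_cons0 ltnn /=.
under [X in (_ && X) && _]eq_forallb do rewrite ffun_consS.
under [X in _ && (X && _)]eq_forallb do rewrite ffun_consS.
under [X in _ && (_ && X)]eq_forallb => i do
  rewrite forall_ordS ffun_cons0 /bump add1n ltn0 /=.
under [X in _ && (_ && X)]eq_forallb => i do
  under eq_forallb => j do rewrite !ffun_consS /bump !add1n ltnS.
by rewrite -andbA; congr andb; rewrite andbCA.
Qed.

Lemma ffun_cons_bij r N :
  bijective (fun p : 'I_N.+1 * {ffun 'I_r -> 'I_N.+1} => ffun_cons p.1 p.2).
Proof.
exists (fun t : {ffun 'I_r.+1 -> 'I_N.+1} => (t ord0, [ffun j => t (lift ord0 j)])).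
  move=> [y g] /=; rewrite ffun_cons0; congr pair.
  by apply/ffunP => j; rewrite ffunE ffun_consS.
move=> t; apply/ffunP => i; rewrite ffunE.
by case: (unliftP ord0 i) => [j ->|->] //; rewrite ffunE.
Qed.

Definition bounded_chain_sum cmp a r N x : R :=
  \sum_(t : {ffun 'I_r -> 'I_N.+1} | chain cmp t && [forall i, cmp (t i) x])
     \prod_(i < r) a (t i).

Lemma bounded_chain_sum0 cmp a N x : bounded_chain_sum cmp a 0 N x = 1.
Proof.
rewrite /bounded_chain_sum (eq_bigl xpredT) => [|t]; last first.
  by rewrite /chain -andbA; apply/and3P; split; apply/forallP => -[].
by rewrite (eq_bigr (fun=> 1)) => [|t _]; rewrite ?big_ord0 // sumr_const card_ffun !card_ord.
Qed.

Lemma bounded_chain_sumS cmp a r N x : transitive cmp ->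
  bounded_chain_sum cmp a r.+1 N x =
  \sum_(y : 'I_N.+1 | (0 < y)%N && cmp y x) a y * bounded_chain_sum cmp a r N y.
Proof.
move=> cmp_trans; rewrite /bounded_chain_sum (reindex _ (onW_bij _ (@ffun_cons_bij r N))) /=.
under [RHS]eq_bigr do rewrite mulr_sumr.
rewrite pair_big_dep /=; apply: eq_big => [[y g]|[y g] _] /=; last first.
  by rewrite big_ord_recl ffun_cons0; congr (_ * _); apply: eq_bigr => i _; rewrite ffun_consS.
rewrite chain_cons forall_ordS ffun_cons0.
under [X in _ && (_ && X)]eq_forallb do rewrite ffun_consS.
have [gy|] := boolP [forall i, cmp (g i) y]; last by rewrite /= !andbF.
have [yx|] := boolP (cmp y x); last by rewrite /= !andbF.
have -> : [forall i, cmp (g i) x].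
  by apply/forallP => i; apply: cmp_trans yx; move/forallP: gy.
by rewrite !andbT.
Qed.

End ChainSums.

Section SymmetricSums.
Variable R : pzSemiRingType.
Implicit Types a : nat -> R.

(* [esym a r n] and [hsym a r n] are the elementary and complete homogeneous
   symmetric functions e_r and h_r of a_0, ..., a_(n-1). *)
Fixpoint esym a r n : R :=
  if r is r'.+1 then \sum_(0 <= y < n) a y * esym a r' y else 1.

Fixpoint hsym a r n : R :=
  if r is r'.+1 then \sum_(0 <= y < n) a y * hsym a r' y.+1 else 1.

Lemma sum_ord_gt0_ltn (F : nat -> R) N x : F 0%N = 0 -> (x <= N.+1)%N ->
  \sum_(y : 'I_N.+1 | (0 < y < x)%N) F y = \sum_(0 <= y < x) F y.
Proof.
move=> F0 xN; rewrite (big_nat_widen 0 x N.+1) // big_mkord big_mkcond.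
by rewrite [RHS]big_mkcond; apply: eq_bigr => -[[|y] ?] _ /=; rewrite ?F0; case: ifP.
Qed.

Lemma bounded_chain_sum_ltn a r N x : a 0%N = 0 -> (x <= N.+1)%N ->
  bounded_chain_sum ltn a r N x = esym a r x.
Proof.
move=> a0; elim: r x => [|r IHr] x xN; first exact: bounded_chain_sum0.
rewrite bounded_chain_sumS /=; last exact: ltn_trans.
rewrite -(@sum_ord_gt0_ltn _ N) ?a0 ?mul0r //; apply: eq_bigr => y /andP[_ yx].
by rewrite IHr // ltnW // (leq_trans yx).
Qed.

Lemma bounded_chain_sum_leq a r N x : a 0%N = 0 -> (x <= N)%N ->
  bounded_chain_sum leq a r N x = hsym a r x.+1.
Proof.
move=> a0; elim: r x => [|r IHr] x xN; first exact: bounded_chain_sum0.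
rewrite bounded_chain_sumS /=; last exact: leq_trans.
rewrite -(@sum_ord_gt0_ltn _ N) ?a0 ?mul0r //; apply: eq_bigr => y /andP[_ yx].
by rewrite IHr // (leq_trans yx).
Qed.

End SymmetricSums.

Section Homogeneity.
Variable R : comPzSemiRingType.
Implicit Types a : nat -> R.

Lemma esymZ (u : R) a r n : esym (fun y => u * a y) r n = u ^+ r * esym a r n.
Proof.
elim: r n => [|r IHr] n /=; first by rewrite mul1r.
by rewrite mulr_sumr; apply: eq_bigr => y _; rewrite IHr exprS mulrACA.
Qed.

Lemma hsymZ (u : R) a r n : hsym (fun y => u * a y) r n = u ^+ r * hsym a r n.
Proof.
elim: r n => [|r IHr] n /=; first by rewrite mul1r.
by rewrite mulr_sumr; apply: eq_bigr => y _; rewrite IHr exprS mulrACA.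
Qed.

End Homogeneity.

Lemma esymN (R : comPzRingType) (a : nat -> R) r n :
  esym (fun y => - a y) r n = (-1) ^+ r * esym a r n.
Proof. by rewrite -esymZ; congr esym; apply: funext => y; rewrite mulN1r. Qed.

Lemma hsymN (R : comPzRingType) (a : nat -> R) r n :
  hsym (fun y => - a y) r n = (-1) ^+ r * hsym a r n.
Proof. by rewrite -hsymZ; congr hsym; apply: funext => y; rewrite mulN1r. Qed.

Lemma prod_split_parity (R : comPzSemiRingType) (F : nat -> R) N : F 0%N = 1 ->
  \prod_(0 <= m < N.*2.+1) F m =
  \prod_(0 <= n < N.+1) F n.*2.-1 * \prod_(0 <= n < N.+1) F n.*2.
Proof.
move=> F0; elim: N => [|N IHN]; first by rewrite !big_nat1 /= F0 mulr1.
rewrite doubleS big_nat_recr //= big_nat_recr //= IHN.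
rewrite [X in _ = X * _]big_nat_recr //= [X in _ = _ * X]big_nat_recr //= doubleS /=.
by rewrite mulrACA -!mulrA.
Qed.

Section GeneratingPolynomials.
Variable R : comNzRingType.
Implicit Types (a b c : nat -> R) (p : {poly R}).

Definition egf a n : {poly R} := \prod_(0 <= y < n) (1 + a y *: 'X).

(* A polynomial stand-in for the power series prod_y 1/(1 - a_y X), which it
   agrees with below degree [M]. *)
Definition hgf M a n : {poly R} := \prod_(0 <= y < n) \sum_(i < M) (a y *: 'X) ^+ i.

Lemma coef_mul_1addZXn p (u : R) k i :
  (p * (1 + u *: 'X^k))`_i = p`_i + (if (i < k)%N then 0 else u * p`_(i - k)).
Proof. by rewrite mulrDr mulr1 coefD -scalerAr coefZ coefMXn; case: ifP; rewrite ?mulr0. Qed.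

Lemma geometric_truncZX (u : R) M :
  (\sum_(i < M) (u *: 'X) ^+ i) * (1 + (- u) *: 'X^1) = 1 + (- u ^+ M) *: 'X^M.
Proof. by rewrite expr1 !scaleNr -opprB mulrN mulrC -subrX1 opprB exprZn. Qed.

Lemma coef_egf a r n : (egf a n)`_r = esym a r n.
Proof.
elim: n r => [|n IHn] r.
  by rewrite /egf big_geq // coef1; case: r => //= r; rewrite big_geq.
rewrite /egf big_nat_recr //= -/(egf a n) -[X in a n *: X]expr1 coef_mul_1addZXn IHn.
by case: r => [|r] /=; rewrite ?addr0 // subn1 IHn big_nat_recr.
Qed.

Lemma hgf_recr M a n :
  hgf M a n.+1 * (1 + (- a n) *: 'X^1) = hgf M a n * (1 + (- a n ^+ M) *: 'X^M).
Proof. by rewrite /hgf big_nat_recr //= -mulrA geometric_truncZX. Qed.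

Lemma coef_hgf M a r n : (r < M)%N -> (hgf M a n)`_r = hsym a r n.
Proof.
elim: n r => [|n IHn] r rM.
  by rewrite /hgf big_geq // coef1; case: r rM => //= r _; rewrite big_geq.
have hgfS k : (k < M)%N ->
    (hgf M a n.+1)`_k = hsym a k n + (if k is k'.+1 then a n * (hgf M a n.+1)`_k' else 0).
  move=> kM; have := congr1 (fun p => p`_k) (hgf_recr M a n).
  rewrite !coef_mul_1addZXn kM IHn // addr0 => <-.
  by case: k kM => [|k] _ /=; rewrite ?addr0 // subn1 /= mulNr subrK.
elim: r rM => [|r IHr] rM; first by rewrite hgfS // addr0.
by rewrite hgfS // IHr 1?ltnW //= [in RHS]big_nat_recr.
Qed.

Lemma coef_mul_prod_1addZXn p c M m r : (r < M)%N ->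
  (p * \prod_(0 <= y < m) (1 + c y *: 'X^M))`_r = p`_r.
Proof.
move=> rM; elim: m => [|m IHm]; first by rewrite big_geq // mulr1.
by rewrite big_nat_recr //= mulrA coef_mul_1addZXn rM addr0.
Qed.

Lemma egf_mul_hgfN M b m :
  egf b m * hgf M (fun y => - b y) m = \prod_(0 <= y < m) (1 + (- (- b y) ^+ M) *: 'X^M).
Proof.
rewrite /egf /hgf -big_split; apply: eq_bigr => y _.
by rewrite /= mulrC -geometric_truncZX opprK expr1.
Qed.

Lemma hgf_mul_egfN M b m :
  hgf M b m * egf (fun y => - b y) m = \prod_(0 <= y < m) (1 + (- b y ^+ M) *: 'X^M).
Proof.
rewrite /egf /hgf -big_split; apply: eq_bigr => y _.
by rewrite /= -geometric_truncZX expr1.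
Qed.

(* Modulo ['X^M], [egf b m] and [hgf M (- b) m] are inverse to each other. *)
Lemma coef_egf_mul M a b n m r : (r < M)%N ->
  (egf a n)`_r =
  \sum_(j < r.+1) (egf a n * egf b m)`_j * (hgf M (fun y => - b y) m)`_(r - j).
Proof. by move=> rM; rewrite -coefM -mulrA egf_mul_hgfN coef_mul_prod_1addZXn. Qed.

Lemma coef_hgf_mul M a b n m r : (r < M)%N ->
  (hgf M a n)`_r =
  \sum_(j < r.+1) (hgf M a n * hgf M b m)`_j * (egf (fun y => - b y) m)`_(r - j).
Proof. by move=> rM; rewrite -coefM -mulrA hgf_mul_egfN coef_mul_prod_1addZXn. Qed.

End GeneratingPolynomials.

Section ParityIdentities.
Variable R : comNzRingType.
Variable a : nat -> R.
Hypothesis a0 : a 0%N = 0.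

Lemma esym_odd r N :
  esym (fun n => a n.*2.-1) r N.+1 =
  \sum_(0 <= j < r.+1)
    (-1) ^+ (r - j) * esym a j N.*2.+1 * hsym (fun n => a n.*2) (r - j) N.+1.
Proof.
rewrite -coef_egf (@coef_egf_mul _ r.+1 _ (fun n => a n.*2) _ N.+1) // big_mkord.
have -> : egf (fun n => a n.*2.-1) N.+1 * egf (fun n => a n.*2) N.+1 = egf a N.*2.+1.
  by rewrite /egf [RHS](@prod_split_parity _ (fun m => 1 + a m *: 'X)) // a0 scale0r addr0.
apply: eq_bigr => j _; rewrite coef_egf coef_hgf ?ltnS ?leq_subr //.
by rewrite hsymN mulrCA mulrA.
Qed.

Lemma hsym_odd r N :
  hsym (fun n => a n.*2.-1) r N.+1 =
  \sum_(0 <= j < r.+1)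
    (-1) ^+ (r - j) * esym (fun n => a n.*2) (r - j) N.+1 * hsym a j N.*2.+1.
Proof.
rewrite -(@coef_hgf _ r.+1) // (@coef_hgf_mul _ r.+1 _ (fun n => a n.*2) _ N.+1) // big_mkord.
have -> : hgf r.+1 (fun n => a n.*2.-1) N.+1 * hgf r.+1 (fun n => a n.*2) N.+1 =
          hgf r.+1 a N.*2.+1.
  rewrite /hgf [RHS](@prod_split_parity _ (fun m => \sum_(i < r.+1) (a m *: 'X) ^+ i)) //.
  by rewrite a0 scale0r big_ord_recl expr0 big1 ?addr0 // => i _; rewrite expr0n.
by apply: eq_bigr => j _; rewrite coef_hgf // coef_egf esymN mulrC.
Qed.

End ParityIdentities.

Section NonnegativeWeights.
Variable R : realType.
Variables (a : nat -> R) (B : R).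
Hypothesis a_ge0 : forall n, 0 <= a n.
Hypothesis sum_a_le : forall n, \sum_(0 <= y < n) a y <= B.

Lemma sum_mul_le (g : nat -> R) (C : R) n : (forall y, 0 <= g y <= C) ->
  \sum_(0 <= y < n) a y * g y <= B * C.
Proof.
move=> gC; apply: le_trans (_ : \sum_(0 <= y < n) a y * C <= _).
  by apply: ler_sum => y _; have /andP[_ ?] := gC y; apply: ler_wpM2l.
by have /andP[g0 g0C] := gC 0%N; rewrite -mulr_suml ler_wpM2r ?(le_trans g0).
Qed.

Lemma esym_ge0 r n : 0 <= esym a r n.
Proof.
elim: r n => [|r IHr] n /=; first exact: ler01.
by apply: sumr_ge0 => y _; apply: mulr_ge0.
Qed.

Lemma hsym_ge0 r n : 0 <= hsym a r n.
Proof.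
elim: r n => [|r IHr] n /=; first exact: ler01.
by apply: sumr_ge0 => y _; apply: mulr_ge0.
Qed.

Lemma esym_le r n : esym a r n <= B ^+ r.
Proof.
elim: r n => [|r IHr] n /=; first by rewrite expr0.
by rewrite exprS; apply: sum_mul_le => y; rewrite esym_ge0 IHr.
Qed.

Lemma hsym_le r n : hsym a r n <= B ^+ r.
Proof.
elim: r n => [|r IHr] n /=; first by rewrite expr0.
by rewrite exprS; apply: sum_mul_le => y; rewrite hsym_ge0 IHr.
Qed.

Lemma cvgn_esym r : cvgn (esym a r).
Proof.
apply: nondecreasing_is_cvgn; last by exists (B ^+ r) => _ [n _ <-]; apply: esym_le.
apply/nondecreasing_seqP => n; case: r => [|r] //=.
by rewrite big_nat_recr //= lerDl mulr_ge0 ?esym_ge0.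
Qed.

Lemma cvgn_hsym r : cvgn (hsym a r).
Proof.
apply: nondecreasing_is_cvgn; last by exists (B ^+ r) => _ [n _ <-]; apply: hsym_le.
apply/nondecreasing_seqP => n; case: r => [|r] //=.
by rewrite big_nat_recr //= lerDl mulr_ge0 ?hsym_ge0.
Qed.

End NonnegativeWeights.

Section TruncatedSums.
Variables (R : realType) (s : R).
Hypothesis s_neq0 : s != 0.
Let c (n : nat) : R := n%:R `^ (- s).

Let c0 : c 0%N = 0.
Proof. by rewrite /c powR0 // oppr_eq0. Qed.

Lemma trunc_sum_strict_esym f r N : f 0%N = 0%N ->
  trunc_sum strict_chain f r s N = esym (fun n => c (f n)) r N.+1.
Proof.
move=> f0; rewrite -(@bounded_chain_sum_ltn _ _ _ N) /= ?f0 //.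
apply: eq_bigl => t; rewrite [X in _ && X](_ : _ = true) ?andbT //.
by apply/forallP => i; exact: ltn_ord.
Qed.

Lemma trunc_sum_weak_hsym f r N : f 0%N = 0%N ->
  trunc_sum weak_chain f r s N = hsym (fun n => c (f n)) r N.+1.
Proof.
move=> f0; rewrite -(@bounded_chain_sum_leq _ _ _ N) /= ?f0 //.
apply: eq_bigl => t; rewrite [X in _ && X](_ : _ = true) ?andbT //.
by apply/forallP => i; rewrite -ltnS; exact: ltn_ord.
Qed.

Let c_double : (fun n => c n.*2) = (fun n => 2 `^ (- s) * c n).
Proof. by apply: funext => n; rewrite /c -muln2 natrM mulrC powRM. Qed.

Let expr_powRN k : (2 `^ (- s)) ^+ k = (2 `^ (k%:R * s))^-1.
Proof. by rewrite -powR_mulrn ?powR_ge0 // -powRrM mulNr mulrC powRN. Qed.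

Lemma trunc_t_r_expansion r N :
  trunc_sum strict_chain (fun n => n.*2.-1) r s N =
  \sum_(0 <= j < r.+1) (-1) ^+ (r - j) / 2 `^ ((r - j)%:R * s) *
    trunc_sum strict_chain id j s N.*2 * trunc_sum weak_chain id (r - j) s N.
Proof.
rewrite trunc_sum_strict_esym // (@esym_odd _ c) //; apply: eq_bigr => j _.
rewrite trunc_sum_strict_esym // trunc_sum_weak_hsym //.
by rewrite c_double hsymZ expr_powRN /=; ring.
Qed.

Lemma trunc_t_star_r_expansion r N :
  trunc_sum weak_chain (fun n => n.*2.-1) r s N =
  \sum_(0 <= j < r.+1) (-1) ^+ (r - j) / 2 `^ ((r - j)%:R * s) *
    trunc_sum strict_chain id (r - j) s N * trunc_sum weak_chain id j s N.*2.
Proof.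
rewrite trunc_sum_weak_hsym // (@hsym_odd _ c) //; apply: eq_bigr => j _.
rewrite trunc_sum_strict_esym // trunc_sum_weak_hsym //.
by rewrite c_double esymZ expr_powRN /=; ring.
Qed.

End TruncatedSums.

Section ZetaConvergence.
Variables (R : realType) (s : R).
Hypothesis s_gt1 : 1 < s.
Let c (n : nat) : R := n%:R `^ (- s).
Local Notation q := (2 * 2 `^ (- s)).

Let s_neq0 : s != 0.
Proof. by rewrite gt_eqF // (lt_trans ltr01). Qed.

Let q_gt0 : 0 < q.
Proof. by rewrite mulr_gt0 ?powR_gt0. Qed.

Let q_lt1 : q < 1.
Proof.
have s1_gt0 : 0 < s - 1 by rewrite subr_gt0.
have : 1 `^ (s - 1) < 2 `^ (s - 1) by rewrite gt0_ltr_powR ?nnegrE ?ler01 ?ler0n ?ltr1n.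
rewrite powR1 /= powRN -(mulr_powRB1 (x := 2) (p := s)) ?ler0n ?(lt_trans ltr01) //.
by rewrite invfM mulrA divff ?pnatr_eq0 // mul1r invf_lt1 // (lt_trans ltr01).
Qed.

Let c_antitone y z : (0 < y)%N -> (y <= z)%N -> c z <= c y.
Proof.
move=> y_gt0 yz; rewrite /c !powRN lef_pV2 ?posrE ?powR_gt0 ?ltr0n ?(leq_trans y_gt0) //.
by rewrite ge0_ler_powR ?nnegrE ?ler0n ?ler_nat // ltW // (lt_trans ltr01).
Qed.

Let c_exp2 k : c (2 ^ k) = (2 `^ (- s)) ^+ k.
Proof. by rewrite /c natrX -powR_mulrn ?ler0n // powRAC powR_mulrn // powR_ge0. Qed.

(* Cauchy condensation: the terms with 2^k <= y < 2^(k+1) add up to at most q^k. *)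
Lemma sum_exp2_powRN_le K : \sum_(0 <= y < 2 ^ K) c y <= \sum_(0 <= k < K) q ^+ k.
Proof.
elim: K => [|K IHK].
  by rewrite expn0 big_nat1 big_geq // /c powR0 // oppr_eq0.
rewrite (@big_cat_nat _ _ _ (2 ^ K)) ?leq_pexp2l //= big_nat_recr //=; apply: lerD => //.
apply: le_trans (_ : \sum_(2 ^ K <= y < 2 ^ K.+1) c (2 ^ K) <= _).
  by apply: ler_sum_nat => y /andP[Ky _]; apply: c_antitone; rewrite ?expn_gt0.
by rewrite sumr_const_nat c_exp2 expnS mul2n -addnn addnK -[leLHS]mulr_natl natrX -exprMn.
Qed.

Lemma sum_powRN_le n : \sum_(0 <= y < n) c y <= (1 - q)^-1.
Proof.
apply: le_trans (_ : \sum_(0 <= y < 2 ^ n) c y <= _).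
  have n_le : (n <= 2 ^ n)%N by apply/ltnW/ltn_expl.
  rewrite [leRHS](@big_cat_nat _ _ _ n) // lerDl.
  by apply: sumr_ge0 => y _; apply: powR_ge0.
apply: le_trans (sum_exp2_powRN_le n) _.
have := @geometric_le_lim _ n 1 q ler01 q_gt0; rewrite gtr0_norm // => /(_ q_lt1).
by rewrite seriesEnat mul1r /=; under eq_bigr do rewrite mul1r.
Qed.

Lemma cvg_trunc_zeta_r r : trunc_sum strict_chain id r s @ \oo --> zeta_r r s.
Proof.
apply: (cvgP (limn (esym c r))).
have -> : trunc_sum strict_chain id r s = [sequence esym c r n.+1]_n.
  by apply/funext => N; exact: trunc_sum_strict_esym.
by rewrite cvg_shiftS; apply: (cvgn_esym _ sum_powRN_le) => n; apply: powR_ge0.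
Qed.

Lemma cvg_trunc_zeta_star_r r : trunc_sum weak_chain id r s @ \oo --> zeta_star_r r s.
Proof.
apply: (cvgP (limn (hsym c r))).
have -> : trunc_sum weak_chain id r s = [sequence hsym c r n.+1]_n.
  by apply/funext => N; exact: trunc_sum_weak_hsym.
by rewrite cvg_shiftS; apply: (cvgn_hsym _ sum_powRN_le) => n; apply: powR_ge0.
Qed.

End ZetaConvergence.

Lemma cvg_comp_double (T : topologicalType) (u : nat -> T) (l : T) :
  u @ \oo --> l -> (fun N => u N.*2) @ \oo --> l.
Proof.
apply: cvg_comp; apply/cvgnyPge => A; near=> N.
by rewrite -addnn (leq_trans _ (leq_addr _ _)) //; near: N; apply: nbhs_infty_ge.
Unshelve. all: end_near.
Qed.

Theorem theorem1p4 (R : realType) (r : nat) (s : R) :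
  (1 <= r)%N -> 1 < s ->
  t_r r s =
    \sum_(0 <= j < r.+1)
      ((-1) ^+ (r - j) / (2 `^ ((r - j)%:R * s)) * zeta_r j s * zeta_star_r (r - j) s)
  /\
  t_star_r r s =
    \sum_(0 <= j < r.+1)
      ((-1) ^+ (r - j) / (2 `^ ((r - j)%:R * s)) * zeta_r (r - j) s * zeta_star_r j s).
Proof.
move=> _ s_gt1; have s_neq0 : s != 0 by rewrite gt_eqF // (lt_trans ltr01).
have Z := cvg_trunc_zeta_r s_gt1; have Zstar := cvg_trunc_zeta_star_r s_gt1.
split.
- rewrite /t_r (funext (trunc_t_r_expansion s_neq0 r)); apply: cvg_lim => //.
  apply: cvg_big => [|j _]; first exact: add_continuous.
  by apply: cvgM; [apply: cvgM; [exact: cvg_cst | exact/cvg_comp_double] | exact: Zstar].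
- rewrite /t_star_r (funext (trunc_t_star_r_expansion s_neq0 r)); apply: cvg_lim => //.
  apply: cvg_big => [|j _]; first exact: add_continuous.
  by apply: cvgM; [apply: cvgM; [exact: cvg_cst | exact: Z] | exact/cvg_comp_double].
Qed.
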